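(* Let $p\in V$ and $S\subset V$. Define $$S_p=\begin{cases}\mathcal N_p\cap(V\setminus S)&\text{if }p\in S,\\ \mathcal N_p\cap S&\text{if }p\notin S,\end{cases}\qquad \overline{S_p}=S_p\cup\{p\}.$$ Define the Dirichlet Laplacian $\Delta'$ on $\overline{S_p}$ by $$(\Delta'u)_i=d_i^{-r}\Big(d_iu_i-\sum_{j\in\overline{S_p}}\omega_{ij}u_j\Big)\ \text{ for }i\in\overline{S_p},\qquad(\Delta'u)_i=0\ \text{ for }i\notin\overline{S_p}.$$ Here $d_i$ is the degree in the full graph. Let $M_p=\max_{i\in V}|((\Delta')^2\chi_{S_p})_i|$ and $k_p=|(\kappa^{1,r}_S)_p|$. Assume $M_p>0$ and $k_p^2>M_p$, and set $$\tau_{1,2}=\frac{k_p\mp\sqrt{k_p^2-M_p}}{M_p}\quad(0<\tau_1<\tau_2).$$ Then for every $\tau\in(\tau_1,\tau_2)$, the set $S'=\{i\in V:(e^{-\tau\Delta}\chi_S)_i\ge\frac12\}$ satisfies $p\in S'$ if and only if $p\notin S$. That is, the phase at node $p$ changes after one MBO iteration.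
   Context: $G=(V,E)$ is a finite undirected weighted graph with vertex set $V=\{1,\dots,n\}$. The weights satisfy $\omega_{ij}=\omega_{ji}\ge0$, with $\omega_{ij}>0$ iff $\{i,j\}\in E$, and $\omega_{ii}=0$. The degrees are $d_i=\sum_j\omega_{ij}>0$. A parameter $r\in[0,1]$ is fixed. The neighbor set of $i$ is $\mathcal N_i=\{j:\omega_{ij}>0\}$. $\chi_S$ is the indicator of $S$. The graph Laplacian is $(\Delta u)_i=d_i^{-r}\sum_j\omega_{ij}(u_i-u_j)$, and $e^{-\tau\Delta}$ is the solution operator of $\dot u=-\Delta u$. The graph curvature (with $q=1$) is given by $(\kappa^{1,r}_S)_i=d_i^{-r}\sum_{j\notin S}\omega_{ij}$ for $i\in S$, and $(\kappa^{1,r}_S)_i=-d_i^{-r}\sum_{j\in S}\omega_{ij}$ for $i\notin S$; equivalently $\kappa^{1,r}_S=\Delta\chi_S$. *)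

From Stdlib Require Import Reals Lra.
Open Scope R_scope.

(* Vertex set V = {0, ..., n-1}; weights w : nat -> nat -> R; sets S as bool predicates. *)

Fixpoint sumV (n : nat) (f : nat -> R) : R :=
  match n with
  | O => 0
  | S m => sumV m f + f m
  end.

(* maxV n f = max(0, max_{i<n} f i); used only on nonnegative f with n >= 1 *)
Fixpoint maxV (n : nat) (f : nat -> R) : R :=
  match n with
  | O => 0
  | S m => Rmax (maxV m f) (f m)
  end.

Definition deg (n : nat) (w : nat -> nat -> R) (i : nat) : R :=
  sumV n (fun j => w i j).

Definition dpow (n : nat) (w : nat -> nat -> R) (r : R) (i : nat) : R :=
  Rpower (deg n w i) (- r).

Definition chi (S : nat -> bool) (i : nat) : R := if S i then 1 else 0.

Definition Lap (n : nat) (w : nat -> nat -> R) (r : R) (u : nat -> R) (i : nat) : R :=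
  dpow n w r i * sumV n (fun j => w i j * (u i - u j)).

Definition kappa (n : nat) (w : nat -> nat -> R) (r : R) (S : nat -> bool) (i : nat) : R :=
  if S i then dpow n w r i * sumV n (fun j => if S j then 0 else w i j)
  else - (dpow n w r i * sumV n (fun j => if S j then w i j else 0)).

Definition isNb (w : nat -> nat -> R) (p j : nat) : bool :=
  if Rlt_dec 0 (w p j) then true else false.

Definition Sp (w : nat -> nat -> R) (S : nat -> bool) (p : nat) (j : nat) : bool :=
  if S p then isNb w p j && negb (S j) else isNb w p j && S j.

Definition Spbar (w : nat -> nat -> R) (S : nat -> bool) (p : nat) (j : nat) : bool :=
  Sp w S p j || Nat.eqb j p.

Definition DLap (n : nat) (w : nat -> nat -> R) (r : R) (S : nat -> bool) (p : nat)
  (u : nat -> R) (i : nat) : R :=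
  if Spbar w S p i then
    dpow n w r i * (deg n w i * u i - sumV n (fun j => if Spbar w S p j then w i j * u j else 0))
  else 0.

Definition Mp (n : nat) (w : nat -> nat -> R) (r : R) (S : nat -> bool) (p : nat) : R :=
  maxV n (fun i => Rabs (DLap n w r S p (DLap n w r S p (chi (Sp w S p))) i)).

Definition kp (n : nat) (w : nat -> nat -> R) (r : R) (S : nat -> bool) (p : nat) : R :=
  Rabs (kappa n w r S p).

Definition tau1 (k M : R) : R := (k - sqrt (k ^ 2 - M)) / M.
Definition tau2 (k M : R) : R := (k + sqrt (k ^ 2 - M)) / M.

(* Let u(t) = e^{-tΔ}χ_S.  If p ∉ S put W = u, if p ∈ S put W = 1 - u.  In
   both cases W solves the heat equation W' = -ΔW with W(0) ≥ 0 and
   W(0) ≥ χ_{S_p}, and the theorem reduces to W(τ)_p > 1/2.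

   The engine is a comparison principle for the graph heat equation, proved
   by a Gronwall argument on the energy Σ_i min(z_i,0)²: a function which is
   a supersolution on a vertex set A and nonnegative off A stays nonnegative.
   It yields positivity of the heat flow and, applied on A = \bar{S_p} to
   W - φ for the barrier
       φ(t) = χ_{S_p} - t Δ'χ_{S_p} - (t²/2) M_p χ_{\bar{S_p}},
   the lower bound W(t)_p ≥ t k_p - t² M_p / 2, because χ_{S_p}(p) = 0 and
   (Δ'χ_{S_p})_p = -k_p.  Finally τ_1 < τ < τ_2 is exactly the window where
   t k_p - t² M_p / 2 > 1/2. *)

From Stdlib Require Import Reals Lra Lia Psatz.
Open Scope R_scope.

Lemma sumV_ext n f g : (forall j, (j < n)%nat -> f j = g j) -> sumV n f = sumV n g.
Proof.
  induction n as [|n IH]; simpl; intros H; [reflexivity|].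
  rewrite IH by (intros; apply H; lia). rewrite H by lia. reflexivity.
Qed.

Lemma sumV_plus n f g : sumV n (fun j => f j + g j) = sumV n f + sumV n g.
Proof. induction n as [|n IH]; simpl; [lra | rewrite IH; lra]. Qed.

Lemma sumV_scal n a f : sumV n (fun j => a * f j) = a * sumV n f.
Proof. induction n as [|n IH]; simpl; [lra | rewrite IH; lra]. Qed.

Lemma sumV_const n a : sumV n (fun _ => a) = INR n * a.
Proof. induction n as [|n IH]; simpl sumV; [simpl; lra | rewrite IH, S_INR; lra]. Qed.

Lemma sumV_le n f g : (forall j, (j < n)%nat -> f j <= g j) -> sumV n f <= sumV n g.
Proof.
  induction n as [|n IH]; simpl; intros H; [lra|].
  assert (f n <= g n) by (apply H; lia).
  assert (sumV n f <= sumV n g) by (apply IH; intros; apply H; lia).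
  lra.
Qed.

Lemma sumV_nonneg n f : (forall j, (j < n)%nat -> 0 <= f j) -> 0 <= sumV n f.
Proof.
  intros H. replace 0 with (sumV n (fun _ => 0)) by (rewrite sumV_const; lra).
  apply sumV_le; auto.
Qed.

Lemma sumV_term n f i :
  (forall j, (j < n)%nat -> 0 <= f j) -> (i < n)%nat -> f i <= sumV n f.
Proof.
  induction n as [|n IH]; simpl; intros H Hi; [lia|].
  assert (0 <= sumV n f) by (apply sumV_nonneg; intros; apply H; lia).
  assert (0 <= f n) by (apply H; lia).
  destruct (Nat.eq_dec i n) as [->|Hne]; [lra|].
  assert (f i <= sumV n f) by (apply IH; [intros; apply H; lia | lia]).
  lra.
Qed.

Lemma maxV_ge n f i : (i < n)%nat -> f i <= maxV n f.
Proof.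
  induction n as [|n IH]; simpl; intros Hi; [lia|].
  destruct (Nat.eq_dec i n) as [->|Hne]; [apply Rmax_r|].
  eapply Rle_trans; [apply IH; lia | apply Rmax_l].
Qed.

Lemma derivable_pt_lim_congr f g t l l' :
  (forall x, f x = g x) -> l = l' -> derivable_pt_lim f t l -> derivable_pt_lim g t l'.
Proof. intros Hfg <- D. exact (derivable_pt_lim_ext f g t l Hfg D). Qed.

Lemma derivable_pt_lim_sumV n (F F' : nat -> R -> R) t :
  (forall i, (i < n)%nat -> derivable_pt_lim (F i) t (F' i t)) ->
  derivable_pt_lim (fun s => sumV n (fun i => F i s)) t (sumV n (fun i => F' i t)).
Proof.
  induction n as [|n IH]; simpl; intros H.
  - apply derivable_pt_lim_const.
  - apply (derivable_pt_lim_plus (fun s => sumV n (fun i => F i s)) (F n));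
      [apply IH; intros; apply H; lia | apply H; lia].
Qed.

Lemma derivable_pt_lim_quadratic a b c t :
  derivable_pt_lim (fun t => a - t * b - t ^ 2 / 2 * c) t (- b - t * c).
Proof.
  eapply derivable_pt_lim_congr; [| |
    apply (derivable_pt_lim_minus _ _ t _ _
      (derivable_pt_lim_minus _ _ t _ _ (derivable_pt_lim_const a t)
         (derivable_pt_lim_scal id b t 1 (derivable_pt_lim_id t)))
      (derivable_pt_lim_scal (fun x => x ^ 2) (c / 2) t _ (derivable_pt_lim_pow t 2)))].
  - intros x. cbv [minus_fct mult_real_fct fct_cte id]. field.
  - simpl. field.
Qed.

Definition neg_sq (x : R) : R := Rmin x 0 ^ 2.

Lemma neg_sq_nonneg x : 0 <= neg_sq x.
Proof. apply pow2_ge_0. Qed.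

Lemma neg_sq_of_nonneg x : 0 <= x -> neg_sq x = 0.
Proof. intros Hx. unfold neg_sq. rewrite Rmin_right by exact Hx. ring. Qed.

Lemma neg_sq_pos x : neg_sq x <= 0 -> 0 <= x.
Proof. unfold neg_sq, Rmin. destruct (Rle_dec x 0); nra. Qed.

Lemma neg_sq_taylor x y : Rabs (neg_sq y - neg_sq x - 2 * Rmin x 0 * (y - x)) <= (y - x) ^ 2.
Proof.
  unfold neg_sq, Rmin.
  pose proof (pow2_ge_0 (y - x)).
  destruct (Rle_dec x 0), (Rle_dec y 0); apply Rabs_le; split; nra.
Qed.

Lemma derivable_pt_lim_neg_sq x : derivable_pt_lim neg_sq x (2 * Rmin x 0).
Proof.
  intros eps Heps. exists (mkposreal eps Heps). intros h Hh Hlt. simpl in Hlt.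
  pose proof (neg_sq_taylor x (x + h)) as Htaylor.
  replace (x + h - x) with h in Htaylor by ring.
  replace ((neg_sq (x + h) - neg_sq x) / h - 2 * Rmin x 0) with
    ((neg_sq (x + h) - neg_sq x - 2 * Rmin x 0 * h) / h) by (field; auto).
  unfold Rdiv. rewrite Rabs_mult, Rabs_inv.
  assert (0 < Rabs h) by (apply Rabs_pos_lt; auto).
  apply (Rmult_lt_reg_r (Rabs h)); auto.
  rewrite Rmult_assoc, Rinv_l by lra. rewrite <- pow2_abs in Htaylor. nra.
Qed.

Lemma neg_part_cross a b : 2 * Rmin a 0 * (b - a) <= neg_sq a + neg_sq b.
Proof. unfold neg_sq, Rmin. destruct (Rle_dec a 0), (Rle_dec b 0); nra. Qed.

(* Gronwall: if ψ' ≤ Kψ on [0,∞) and ψ(0) ≤ 0 then ψ ≤ 0 on [0,∞), since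
   ψ(t) e^{-Kt} is nonincreasing. *)
Lemma gronwall_nonpos (psi dpsi : R -> R) (K : R) :
  (forall s, 0 <= s -> derivable_pt_lim psi s (dpsi s)) ->
  (forall s, 0 <= s -> dpsi s <= K * psi s) ->
  psi 0 <= 0 -> forall t, 0 <= t -> psi t <= 0.
Proof.
  intros Hd Hbound H0 t Ht.
  set (g := fun s => psi s * exp (- (K * s))).
  set (dg := fun s => dpsi s * exp (- (K * s)) + psi s * (exp (- (K * s)) * - K)).
  assert (Hg : forall s, 0 <= s -> derivable_pt_lim g s (dg s)).
  { intros s Hs. apply (derivable_pt_lim_mult psi (fun s => exp (- (K * s)))); [auto|].
    apply (derivable_pt_lim_comp (fun s => - (K * s)) exp); [|apply derivable_pt_lim_exp].
    eapply derivable_pt_lim_congr;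
      [| | apply derivable_pt_lim_opp, derivable_pt_lim_scal, derivable_pt_lim_id].
    - reflexivity.
    - ring. }
  assert (Hg_decr : g t <= g 0).
  { destruct (Req_dec t 0) as [->|Hne]; [lra|].
    destruct (MVT_cor2 g dg 0 t) as [c [Heq Hc]]; [lra | intros; apply Hg; lra|].
    assert (dg c <= 0).
    { unfold dg. pose proof (Hbound c ltac:(lra)). pose proof (exp_pos (- (K * c))). nra. }
    nra. }
  unfold g in Hg_decr. rewrite Rmult_0_r, Ropp_0, exp_0 in Hg_decr.
  pose proof (exp_pos (- (K * t))). nra.
Qed.

(* The weights d_i^{-r} are positive (Rpower is defined through exp). *)
Lemma dpow_pos n w r i : 0 < dpow n w r i.
Proof. unfold dpow, Rpower. apply exp_pos. Qed.

Section Comparison.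
Variables (n : nat) (w : nat -> nat -> R) (r : R).
Hypothesis Hnn : forall i j, (i < n)%nat -> (j < n)%nat -> 0 <= w i j.

Lemma Lap_opp (z : nat -> R) i :
  - Lap n w r z i = dpow n w r i * sumV n (fun j => w i j * (z j - z i)).
Proof.
  unfold Lap. rewrite (sumV_ext n (fun j => w i j * (z j - z i))
    (fun j => -1 * (w i j * (z i - z j)))) by (intros; ring).
  rewrite sumV_scal. ring.
Qed.

Lemma Lap_minus (x y : nat -> R) i :
  Lap n w r (fun j => x j - y j) i = Lap n w r x i - Lap n w r y i.
Proof.
  unfold Lap. rewrite (sumV_ext n _ (fun j => w i j * (x i - x j) + -1 * (w i j * (y i - y j))))
    by (intros; ring).
  rewrite sumV_plus, sumV_scal. ring.
Qed.

Definition coupling : R := sumV n (fun i => sumV n (fun j => dpow n w r i * w i j)).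

Lemma coupling_ge i j : (i < n)%nat -> (j < n)%nat -> dpow n w r i * w i j <= coupling.
Proof.
  intros Hi Hj. assert (Hc : forall i j, (i < n)%nat -> (j < n)%nat -> 0 <= dpow n w r i * w i j)
    by (intros; apply Rmult_le_pos; [left; apply dpow_pos | auto]).
  apply Rle_trans with (sumV n (fun j => dpow n w r i * w i j)).
  - apply (sumV_term n (fun j => dpow n w r i * w i j)); auto.
  - apply (sumV_term n (fun i => sumV n (fun j => dpow n w r i * w i j))); auto.
    intros; apply sumV_nonneg; auto.
Qed.

Definition neg_energy (z : nat -> R) : R := sumV n (fun i => neg_sq (z i)).

(* Energy estimate: if z is a supersolution (z' ≥ -Δz) on A and z ≥ 0 off A,
   then d/dt Σ min(z_i,0)² = Σ 2 min(z_i,0) z'_i ≤ K Σ min(z_i,0)². *)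
Lemma neg_energy_growth (A : nat -> bool) (z dz : nat -> R) :
  (forall i, (i < n)%nat -> A i = true -> - Lap n w r z i <= dz i) ->
  (forall i, (i < n)%nat -> A i = false -> 0 <= z i) ->
  sumV n (fun i => 2 * Rmin (z i) 0 * dz i) <= 2 * INR n * coupling * neg_energy z.
Proof.
  intros Hsuper Hoff.
  apply Rle_trans with
    (sumV n (fun i => sumV n (fun j => dpow n w r i * w i j * (neg_sq (z i) + neg_sq (z j))))).
  { apply sumV_le. intros i Hi. destruct (A i) eqn:HAi.
    - assert (Hmin : Rmin (z i) 0 <= 0) by apply Rmin_r.
      pose proof (Hsuper i Hi HAi) as Hzi. rewrite Lap_opp in Hzi.
      apply Rle_trans with
        (2 * Rmin (z i) 0 * (dpow n w r i * sumV n (fun j => w i j * (z j - z i)))); [nra|].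
      rewrite <- !sumV_scal. apply sumV_le. intros j Hj.
      pose proof (neg_part_cross (z i) (z j)).
      assert (0 <= dpow n w r i * w i j) by (apply Rmult_le_pos; [left; apply dpow_pos | auto]).
      nra.
    - rewrite Rmin_right by (apply Hoff; auto). rewrite !Rmult_0_r, Rmult_0_l.
      apply sumV_nonneg; intros j Hj. apply Rmult_le_pos.
      + apply Rmult_le_pos; [left; apply dpow_pos | auto].
      + pose proof (neg_sq_nonneg (z i)); pose proof (neg_sq_nonneg (z j)); lra. }
  apply Rle_trans with
    (sumV n (fun i => sumV n (fun j => coupling * (neg_sq (z i) + neg_sq (z j))))).
  { apply sumV_le; intros i Hi; apply sumV_le; intros j Hj.
    apply Rmult_le_compat_r; [|apply coupling_ge; auto].
    pose proof (neg_sq_nonneg (z i)); pose proof (neg_sq_nonneg (z j)); lra. }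
  right. unfold neg_energy.
  rewrite (sumV_ext n _ (fun i => coupling * (INR n * neg_sq (z i) + neg_energy z)))
    by (intros; rewrite sumV_scal, sumV_plus, sumV_const; reflexivity).
  rewrite sumV_scal, sumV_plus, sumV_const, sumV_scal. unfold neg_energy. ring.
Qed.

Lemma comparison (A : nat -> bool) (z dz : R -> nat -> R) :
  (forall t i, (i < n)%nat -> derivable_pt_lim (fun s => z s i) t (dz t i)) ->
  (forall i, (i < n)%nat -> 0 <= z 0 i) ->
  (forall t i, 0 <= t -> (i < n)%nat -> A i = true -> - Lap n w r (z t) i <= dz t i) ->
  (forall t i, 0 <= t -> (i < n)%nat -> A i = false -> 0 <= z t i) ->
  forall t i, 0 <= t -> (i < n)%nat -> 0 <= z t i.
Proof.
  intros Hd H0 Hsuper Hoff t i Ht Hi.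
  assert (Henergy : neg_energy (z t) <= 0).
  { apply (gronwall_nonpos (fun s => neg_energy (z s))
      (fun s => sumV n (fun i => 2 * Rmin (z s i) 0 * dz s i)) (2 * INR n * coupling)); auto.
    - intros s _. apply (derivable_pt_lim_sumV n (fun i s => neg_sq (z s i))
        (fun i s => 2 * Rmin (z s i) 0 * dz s i)).
      intros k Hk. eapply derivable_pt_lim_congr; [| |
        apply (derivable_pt_lim_comp (fun s => z s k) neg_sq);
          [apply Hd; auto | apply derivable_pt_lim_neg_sq]]; reflexivity.
    - intros s Hs. apply (neg_energy_growth A); auto.
    - right. unfold neg_energy. rewrite (sumV_ext n _ (fun _ => 0)).
      + rewrite sumV_const; ring.
      + intros; apply neg_sq_of_nonneg; auto. }
  apply neg_sq_pos. eapply Rle_trans; [|exact Henergy].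
  apply (sumV_term n (fun i => neg_sq (z t i))); auto. intros; apply neg_sq_nonneg.
Qed.

Definition heat_flow (W : R -> nat -> R) : Prop :=
  forall t i, (i < n)%nat -> derivable_pt_lim (fun s => W s i) t (- Lap n w r (W t) i).

Lemma heat_flow_nonneg W :
  heat_flow W -> (forall i, (i < n)%nat -> 0 <= W 0 i) ->
  forall t i, 0 <= t -> (i < n)%nat -> 0 <= W t i.
Proof.
  intros HW H0. apply (comparison (fun _ => true) W (fun t i => - Lap n w r (W t) i)); auto.
  - intros; lra.
  - intros; discriminate.
Qed.

Lemma heat_flow_reflect W : heat_flow W -> heat_flow (fun t i => 1 - W t i).
Proof.
  intros HW t i Hi.
  eapply derivable_pt_lim_congr; [| |
    apply (derivable_pt_lim_minus (fct_cte 1) (fun s => W s i));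
      [apply derivable_pt_lim_const | apply HW; auto]].
  - reflexivity.
  - unfold Lap. rewrite (sumV_ext n (fun j => w i j * (1 - W t i - (1 - W t j)))
      (fun j => -1 * (w i j * (W t i - W t j)))) by (intros; ring).
    rewrite sumV_scal. ring.
Qed.

End Comparison.

Section DirichletLaplacian.
Variables (n : nat) (w : nat -> nat -> R) (r : R) (S : nat -> bool) (p : nat).
Hypothesis Hnn : forall i j, (i < n)%nat -> (j < n)%nat -> 0 <= w i j.

Lemma DLap_lincomb (phi x y z : nat -> R) a b c i :
  (forall j, phi j = a * x j + b * y j + c * z j) ->
  DLap n w r S p phi i =
  a * DLap n w r S p x i + b * DLap n w r S p y i + c * DLap n w r S p z i.
Proof.
  intros Hphi. unfold DLap. destruct (Spbar w S p i); [|ring].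
  rewrite (sumV_ext n _ (fun j => a * (if Spbar w S p j then w i j * x j else 0) +
    b * (if Spbar w S p j then w i j * y j else 0) +
    c * (if Spbar w S p j then w i j * z j else 0))).
  - rewrite !sumV_plus, !sumV_scal, Hphi. ring.
  - intros j _. rewrite Hphi. destruct (Spbar w S p j); ring.
Qed.

Lemma Lap_supported (phi : nat -> R) i :
  (forall j, Spbar w S p j = false -> phi j = 0) -> Spbar w S p i = true ->
  Lap n w r phi i = DLap n w r S p phi i.
Proof.
  intros Hsupp Hi. unfold Lap, DLap, deg. rewrite Hi. f_equal.
  rewrite (sumV_ext n _ (fun j => phi i * w i j +
    (-1) * (if Spbar w S p j then w i j * phi j else 0))).
  - rewrite sumV_plus, !sumV_scal. change (sumV n (w i)) with (sumV n (fun j => w i j)). ring.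
  - intros j _. destruct (Spbar w S p j) eqn:Hj; [ring|]. rewrite (Hsupp j Hj). ring.
Qed.

(* Δ'χ_{\bar{S_p}} ≥ 0: the Dirichlet Laplacian of the indicator only sees the
   weight leaving \bar{S_p}. *)
Lemma DLap_indicator_nonneg i : (i < n)%nat -> 0 <= DLap n w r S p (chi (Spbar w S p)) i.
Proof.
  intros Hi. unfold DLap. destruct (Spbar w S p i) eqn:E; [|lra].
  apply Rmult_le_pos; [left; apply dpow_pos|].
  assert (sumV n (fun j => if Spbar w S p j then w i j * chi (Spbar w S p) j else 0)
          <= deg n w i).
  { apply sumV_le. intros j Hj. unfold chi. pose proof (Hnn i j Hi Hj).
    destruct (Spbar w S p j); lra. }
  unfold chi at 1. rewrite E. lra.
Qed.

Lemma Spbar_self : Spbar w S p p = true.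
Proof. unfold Spbar. rewrite Nat.eqb_refl. apply Bool.orb_true_r. Qed.

Hypothesis Hp : (p < n)%nat.
Hypothesis Hdiag : forall i, (i < n)%nat -> w i i = 0.

(* p is not its own neighbour, hence p ∉ S_p. *)
Lemma chi_Sp_self : chi (Sp w S p) p = 0.
Proof.
  unfold chi, Sp, isNb. rewrite (Hdiag p Hp).
  destruct (Rlt_dec 0 0); [lra|]. destruct (S p); reflexivity.
Qed.

(* k_p is the weight from p to the opposite side, which by nonnegativity of
   the weights is the weight from p to S_p. *)
Lemma kp_Sp : kp n w r S p = dpow n w r p * sumV n (fun j => if Sp w S p j then w p j else 0).
Proof.
  assert (Hpos : 0 <= dpow n w r p * sumV n (fun j => if Sp w S p j then w p j else 0)).
  { apply Rmult_le_pos; [left; apply dpow_pos|]. apply sumV_nonneg. intros j Hj.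
    destruct (Sp w S p j); [apply Hnn; auto | lra]. }
  unfold kp, kappa. destruct (S p) eqn:HSp; [|rewrite Rabs_Ropp];
    rewrite (sumV_ext n _ (fun j => if Sp w S p j then w p j else 0));
    try (apply Rabs_pos_eq; exact Hpos);
    intros j Hj; unfold Sp, isNb; rewrite HSp; pose proof (Hnn p j Hp Hj);
    destruct (S j), (Rlt_dec 0 (w p j)); simpl; lra.
Qed.

Lemma DLap_Sp_self : DLap n w r S p (chi (Sp w S p)) p = - kp n w r S p.
Proof.
  rewrite kp_Sp. unfold DLap. rewrite Spbar_self, chi_Sp_self.
  rewrite (sumV_ext n _ (fun j => if Sp w S p j then w p j else 0)); [ring|].
  intros j _. unfold chi, Spbar. destruct (Sp w S p j); simpl; [ring|].
  destruct (j =? p)%nat; ring.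
Qed.


(* The barrier φ(t) = χ_{S_p} - t Δ'χ_{S_p} - (t²/2) M_p χ_{\bar{S_p}}, a
   second-order expansion of the heat flow from χ_{S_p}, supported in
   \bar{S_p}, and its time derivative. *)
Definition barrier (t : R) (j : nat) : R :=
  chi (Sp w S p) j - t * DLap n w r S p (chi (Sp w S p)) j
  - t ^ 2 / 2 * (Mp n w r S p * chi (Spbar w S p) j).

Definition barrier_rate (t : R) (j : nat) : R :=
  - DLap n w r S p (chi (Sp w S p)) j - t * (Mp n w r S p * chi (Spbar w S p) j).

Lemma barrier_deriv t j : derivable_pt_lim (fun s => barrier s j) t (barrier_rate t j).
Proof. apply derivable_pt_lim_quadratic. Qed.

Lemma barrier_initial j : barrier 0 j = chi (Sp w S p) j.
Proof. unfold barrier. field. Qed.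

Lemma barrier_supported t j : Spbar w S p j = false -> barrier t j = 0.
Proof.
  intros Hj. unfold barrier, chi, DLap. rewrite Hj.
  unfold Spbar in Hj. apply Bool.orb_false_iff in Hj as [Hj _]. rewrite Hj. ring.
Qed.

Lemma barrier_at_p t : barrier t p = t * kp n w r S p - t ^ 2 / 2 * Mp n w r S p.
Proof.
  unfold barrier. rewrite chi_Sp_self, DLap_Sp_self. unfold chi. rewrite Spbar_self. field.
Qed.

(* φ is a subsolution on \bar{S_p}: φ' + Δφ ≤ 0 there, because
   |(Δ'²χ_{S_p})_i| ≤ M_p and Δ'χ_{\bar{S_p}} ≥ 0. *)
Lemma barrier_subsolution t i :
  0 <= t -> (i < n)%nat -> Spbar w S p i = true ->
  barrier_rate t i + Lap n w r (barrier t) i <= 0.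
Proof.
  intros Ht Hi HA.
  set (G := DLap n w r S p (chi (Sp w S p))).
  set (M := Mp n w r S p).
  assert (HH : Rabs (DLap n w r S p G i) <= M)
    by exact (maxV_ge n (fun i => Rabs (DLap n w r S p G i)) i Hi).
  assert (HM : 0 <= M) by (eapply Rle_trans; [apply Rabs_pos | exact HH]).
  pose proof (DLap_indicator_nonneg i Hi) as HDB.
  assert (HHlow : - M <= DLap n w r S p G i).
  { pose proof (Rle_abs (- DLap n w r S p G i)). rewrite Rabs_Ropp in *. lra. }
  rewrite Lap_supported by (auto; apply barrier_supported).
  rewrite (DLap_lincomb (barrier t) (chi (Sp w S p)) G (chi (Spbar w S p))
    1 (- t) (- (t ^ 2 / 2 * M))) by (intros; unfold barrier; fold G M; ring).
  unfold barrier_rate. fold G M. unfold chi at 1. rewrite HA.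
  assert (0 <= t * (DLap n w r S p G i + M)) by (apply Rmult_le_pos; lra).
  assert (0 <= t ^ 2 / 2 * M * DLap n w r S p (chi (Spbar w S p)) i).
  { apply Rmult_le_pos; [|exact HDB]. pose proof (pow2_ge_0 t). apply Rmult_le_pos; lra. }
  lra.
Qed.

(* Lower bound at p for any heat flow W with W(0) ≥ 0 and W(0) ≥ χ_{S_p}:
   by the comparison principle on \bar{S_p}, W - φ stays nonnegative. *)
Lemma barrier_lower_bound (W : R -> nat -> R) :
  heat_flow n w r W ->
  (forall i, (i < n)%nat -> 0 <= W 0 i) ->
  (forall i, (i < n)%nat -> chi (Sp w S p) i <= W 0 i) ->
  forall t, 0 <= t -> t * kp n w r S p - t ^ 2 / 2 * Mp n w r S p <= W t p.
Proof.
  intros HW H0 HX t Ht.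
  assert (Hcmp : forall t i, 0 <= t -> (i < n)%nat -> 0 <= W t i - barrier t i).
  { apply (comparison n w r Hnn (Spbar w S p) (fun t i => W t i - barrier t i)
      (fun t i => - Lap n w r (W t) i - barrier_rate t i)).
    - intros s i Hi. apply derivable_pt_lim_minus; [apply HW; auto | apply barrier_deriv].
    - intros i Hi. rewrite barrier_initial. pose proof (HX i Hi). lra.
    - intros s i Hs Hi HA. rewrite Lap_minus.
      pose proof (barrier_subsolution s i Hs Hi HA). lra.
    - intros s i Hs Hi HA. rewrite barrier_supported by exact HA.
      pose proof (heat_flow_nonneg n w r Hnn W HW H0 s i Hs Hi). lra. }
  pose proof (Hcmp t p Ht Hp). rewrite barrier_at_p in *. lra.
Qed.

(* The initial datum dominates χ_{S_p} on the relevant side: S_p ⊂ S when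
   p ∉ S and S_p ⊂ V \ S when p ∈ S. *)
Lemma chi_Sp_le i : chi (Sp w S p) i <= if S p then 1 - chi S i else chi S i.
Proof. unfold chi, Sp. destruct (S p), (isNb w p i), (S i); simpl; lra. Qed.

End DirichletLaplacian.

Lemma quadratic_window k M tau :
  0 < M -> M < k ^ 2 -> 0 <= k -> tau1 k M < tau < tau2 k M ->
  0 <= tau /\ 1 / 2 < tau * k - tau ^ 2 / 2 * M.
Proof.
  intros HM Hk Hk0 [H1 H2]. unfold tau1, tau2 in H1, H2.
  set (s := sqrt (k ^ 2 - M)) in *.
  assert (Hs2 : s * s = k ^ 2 - M) by (apply sqrt_sqrt; lra).
  assert (Hs0 : 0 <= s) by apply sqrt_pos.
  apply (Rmult_lt_compat_r M) in H1, H2; auto.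
  unfold Rdiv in H1, H2. rewrite Rmult_assoc, Rinv_l, Rmult_1_r in H1, H2 by lra.
  assert (s < k) by nra.
  assert ((tau * M - k) * (tau * M - k) < s * s) by nra.
  split; nra.
Qed.

Theorem mainTheorem15
  (n : nat) (w : nat -> nat -> R) (r : R)
  (Hr : 0 <= r <= 1)
  (Hsym : forall i j, (i < n)%nat -> (j < n)%nat -> w i j = w j i)
  (Hnn : forall i j, (i < n)%nat -> (j < n)%nat -> 0 <= w i j)
  (Hdiag : forall i, (i < n)%nat -> w i i = 0)
  (Hdeg : forall i, (i < n)%nat -> 0 < deg n w i)
  (S : nat -> bool) (p : nat) (Hp : (p < n)%nat)
  (HM : 0 < Mp n w r S p)
  (Hk : kp n w r S p ^ 2 > Mp n w r S p)
  (tau : R)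
  (Htau : tau1 (kp n w r S p) (Mp n w r S p) < tau < tau2 (kp n w r S p) (Mp n w r S p))
  (u : R -> nat -> R)
  (Hu0 : forall i, (i < n)%nat -> u 0 i = chi S i)
  (Hode : forall (t : R) (i : nat), (i < n)%nat ->
            derivable_pt_lim (fun s => u s i) t (- Lap n w r (u t) i)) :
  (u tau p >= 1 / 2 <-> S p = false).
Proof.
  destruct (quadratic_window (kp n w r S p) (Mp n w r S p) tau HM Hk (Rabs_pos _) Htau)
    as [Htau0 Hwindow].
  assert (Hflip : forall W, heat_flow n w r W -> (forall i, (i < n)%nat -> 0 <= W 0 i) ->
            (forall i, (i < n)%nat -> chi (Sp w S p) i <= W 0 i) -> 1 / 2 < W tau p).
  { intros W HW H0 HX.
    pose proof (barrier_lower_bound n w r S p Hnn Hp Hdiag W HW H0 HX tau Htau0). lra. }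
  assert (Hchi : forall i, 0 <= chi S i <= 1) by (intros i; unfold chi; destruct (S i); lra).
  pose proof (chi_Sp_le w S p) as HSp_le.
  destruct (S p) eqn:HSp.
  - (* p ∈ S: the complement 1 - u exceeds 1/2, so p leaves the phase. *)
    assert (1 / 2 < 1 - u tau p).
    { apply (Hflip (fun t i => 1 - u t i)); [apply heat_flow_reflect; exact Hode| |];
        intros i Hi; rewrite Hu0 by exact Hi; [pose proof (Hchi i) | pose proof (HSp_le i)]; lra. }
    split; intros; [lra | discriminate].
  - (* p ∉ S: u itself exceeds 1/2, so p enters the phase. *)
    assert (1 / 2 < u tau p).
    { apply (Hflip u); [exact Hode | |]; intros i Hi; rewrite Hu0 by exact Hi;
        [pose proof (Hchi i) | pose proof (HSp_le i)]; lra. }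
    split; intros; [reflexivity | lra].
Qed.
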